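(* Let $G=(V,E)$ be a simple undirected graph that is not complete. Then (a) $\textnormal{conv}(X(G))\subseteq\mathbb{R}^{E^c}$ is full-dimensional, and (b) for every $f\in E^c$ the inequality $x_f\le 1$ is facet-defining for $\textnormal{conv}(X(G))$.
   Context: $E^c=\binom{V}{2}\setminus E$. For $x\in\{0,1\}^{E^c}$, $E(x)=\{f\in E^c:x_f=1\}$, and $X(G)=\{x\in\{0,1\}^{E^c}:(V,E\cup E(x))\text{ is chordal}\}$, where a graph is chordal if every cycle with at least four vertices has a chord (an edge joining two nonconsecutive vertices of the cycle). *)

From mathcomp Require Import all_boot all_order all_algebra.
Set Implicit Arguments. Unset Strict Implicit. Unset Printing Implicit Defensive.
Import Order.TTheory GRing.Theory Num.Theory.
Local Open Scope ring_scope.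

(* A simple undirected graph G = (V,E) is given by V : finType and a
   symmetric irreflexive relation e : rel V (u ~ v iff {u,v} \in E). *)

Definition is_nonedge (V : finType) (e : rel V) (s : {set V}) : bool :=
  [exists u, exists v, [&& u != v, s == [set u; v] & ~~ e u v]].

Notation Ec e := {s : {set _} | is_nonedge e s}.

Definition augment (V : finType) (e : rel V) (x : {ffun Ec e -> bool}) : rel V :=
  fun u v => e u v || [exists f : Ec e, (val f == [set u; v]) && x f].

Definition chordal (V : finType) (g : rel V) : Prop :=
  forall (x0 : V) (c : seq V), (4 <= size c)%N -> uniq c -> cycle g c ->
    exists i j : nat, [/\ (i < size c)%N /\ (j < size c)%N, i != j,
      j != (i.+1 %% size c)%N, i != (j.+1 %% size c)%N
      & g (nth x0 c i) (nth x0 c j)].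
(* (x0 is only a default value for nth; all indices used are in range.) *)

Definition XG (V : finType) (e : rel V) (x : {ffun Ec e -> bool}) : Prop :=
  chordal (augment x).

Definition conv01 (R : realFieldType) (I : finType) (S : {ffun I -> bool} -> Prop)
    (y : I -> R) : Prop :=
  exists lam : {ffun I -> bool} -> R,
    [/\ forall x, 0 <= lam x, forall x, lam x != 0 -> S x,
        \sum_(x : {ffun I -> bool}) lam x = 1
      & forall i, y i = \sum_(x : {ffun I -> bool}) lam x * (x i)%:R].

Definition aff_indep (R : realFieldType) (I : finType) (k : nat) (p : 'I_k -> I -> R) : Prop :=
  forall mu : 'I_k -> R, \sum_(j < k) mu j = 0 ->
    (forall i, \sum_(j < k) mu j * p j i = 0) -> forall j, mu j = 0.

(* aff_rank S n : the maximum number of affinely independent points of S is n,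
   i.e. dim(S) = n - 1 (dimension of the affine hull). *)
Definition aff_rank (R : realFieldType) (I : finType) (S : (I -> R) -> Prop) (n : nat) : Prop :=
  (exists p : 'I_n -> I -> R, (forall j, S (p j)) /\ aff_indep p) /\
  (forall (m : nat) (p : 'I_m -> I -> R), (forall j, S (p j)) -> aff_indep p -> (m <= n)%N).

Definition full_dimensional (R : realFieldType) (I : finType) (S : (I -> R) -> Prop) : Prop :=
  aff_rank S #|I|.+1.

Definition facet_defining (R : realFieldType) (I : finType) (P : (I -> R) -> Prop)
    (a : I -> R) (b : R) : Prop :=
  (forall y, P y -> \sum_i a i * y i <= b) /\
  exists n : nat, aff_rank P n.+1 /\
                  aff_rank (fun y => P y /\ \sum_i a i * y i = b) n.

From mathcomp Require Import all_boot all_order all_algebra.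
Set Implicit Arguments.
Unset Strict Implicit.
Unset Printing Implicit Defensive.
Import Order.TTheory GRing.Theory Num.Theory.
Local Open Scope ring_scope.

(* A chordless cycle of length at least four has two distinct missing
   diagonals, so adding all non-edges of G but at most one always yields a
   chordal graph.  The all-ones vector together with the vectors having a
   single zero coordinate are |E^c| + 1 affinely independent points of X(G);
   those with x_f = 1 are |E^c| of them.  Counting dimensions gives the
   matching upper bounds, hence (a) and (b). *)

Lemma exists_linear_relation (F : fieldType) (J : finType) m
    (q : 'I_m -> J -> F) :
  (#|J| < m)%N ->
  exists2 mu : 'I_m -> F, (exists j, mu j != 0) &
    forall i, \sum_(j < m) mu j * q j i = 0.
Proof.
move=> ltJm; pose A : 'M[F]_(m, #|J|) := \matrix_(j, k) q j (enum_val k).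
have : kermx A != 0.
  by rewrite kermx_eq0 -row_leq_rank -ltnNge (leq_ltn_trans (rank_leq_col A)).
case/rowV0Pn => v /sub_kermxP vA0 v_neq0.
exists (v 0).
  apply/existsP; apply: contraNT v_neq0 => /existsPn v0.
  by apply/eqP/rowP => j; rewrite mxE; apply/eqP/negbNE/v0.
move=> i; transitivity ((v *m A) 0 (enum_rank i)); last by rewrite vA0 mxE.
by rewrite mxE; apply: eq_bigr => j _; rewrite mxE enum_rankK.
Qed.

Section AffineIndependence.
Variables (R : realFieldType) (I : finType).

Lemma aff_indep_card m (p : 'I_m -> I -> R) :
  aff_indep p -> (m <= #|I|.+1)%N.
Proof.
move=> indep_p; rewrite leqNgt; apply/negP; rewrite -(card_option I) => ltIm.
have [mu [j mu_j] rel] := exists_linear_relation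
  (fun j (o : option I) => if o is Some i then p j i else 1) ltIm.
suff mu0 : forall k, mu k = 0 by rewrite mu0 eqxx in mu_j.
apply: indep_p => [|i]; last exact: rel (Some i).
by have := rel None; under eq_bigr => k _ do rewrite mulr1.
Qed.

(* Replacing the constant coordinate [f] by [1] keeps the points in a space of
   dimension [#|I|] while recording the affine constraint [\sum mu = 0]. *)
Lemma aff_indep_card_const_coord m (p : 'I_m -> I -> R) (f : I) (c : R) :
  (forall j, p j f = c) -> aff_indep p -> (m <= #|I|)%N.
Proof.
move=> pf indep_p; rewrite leqNgt; apply/negP => ltIm.
have [mu [j mu_j] rel] :=
  exists_linear_relation (fun j i => if i == f then 1 else p j i) ltIm.
have sum_mu : \sum_(k < m) mu k = 0.
  by have := rel f; rewrite eqxx; under eq_bigr => k _ do rewrite mulr1.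
suff mu0 : forall k, mu k = 0 by rewrite mu0 eqxx in mu_j.
apply: indep_p => // i.
have [->|neq_if] := eqVneq i f; last by have := rel i; rewrite (negbTE neq_if).
by under eq_bigr => k _ do rewrite pf; rewrite -mulr_suml sum_mu mul0r.
Qed.

Definition ones_but (o : option I) : {ffun I -> bool} :=
  [ffun i => Some i != o].

Lemma sum_neq_mul k (mu : 'I_k -> R) (t : 'I_k) :
  \sum_(j < k) mu j * (j != t)%:R = \sum_(j < k) mu j - mu t.
Proof.
rewrite (bigD1 t) //= eqxx mulr0 add0r [in RHS](bigD1 t) //= addrC addrK.
by apply: eq_bigr => j ->; rewrite mulr1.
Qed.

Lemma aff_indep_ones_but k (o : 'I_k -> option I) :
  injective o -> aff_indep (fun j i => (ones_but (o j) i)%:R : R).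
Proof.
move=> inj_o mu sum_mu rel.
have mu_Some j i : o j = Some i -> mu j = 0.
  move=> oj; have := rel i.
  under eq_bigr => j' _ do rewrite ffunE -oj (inj_eq inj_o) eq_sym.
  by rewrite sum_neq_mul sum_mu sub0r => /eqP; rewrite oppr_eq0 => /eqP.
move=> j; case oj: (o j) => [i|]; first exact: mu_Some oj.
move: sum_mu; rewrite (bigD1 j) //= big1 ?addr0 // => j' neq_j'j.
case oj': (o j') => [i|]; first exact: mu_Some oj'.
by move: neq_j'j; rewrite -oj' in oj; rewrite (inj_o _ _ oj) eqxx.
Qed.

Lemma conv01_point (S : {ffun I -> bool} -> Prop) (x : {ffun I -> bool}) :
  S x -> conv01 S (fun i => (x i)%:R : R).
Proof.
move=> Sx; exists (fun z => (z == x)%:R); split.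
- by move=> z; rewrite ler0n.
- by move=> z; have [->|] := eqVneq z x; rewrite ?eqxx.
- by rewrite (bigD1 x) //= eqxx big1 ?addr0 // => z /negbTE ->.
- move=> i; rewrite (bigD1 x) //= eqxx mul1r big1 ?addr0 // => z /negbTE ->.
  by rewrite mul0r.
Qed.

Lemma conv01_le1 (S : {ffun I -> bool} -> Prop) (y : I -> R) i :
  conv01 S y -> y i <= 1.
Proof.
case=> lam [lam_ge0 _ sum_lam ->]; rewrite -[leRHS]sum_lam.
by apply: ler_sum => x _; case: (x i); rewrite ?mulr1 ?mulr0.
Qed.

Lemma sum_indicator_mul (f : I) (y : I -> R) :
  \sum_i (if i == f then 1 else 0) * y i = y f.
Proof.
rewrite (bigD1 f) //= eqxx mul1r big1 ?addr0 // => i /negbTE ->.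
by rewrite mul0r.
Qed.

End AffineIndependence.

Section ChordalCompletions.
Variables (V : finType) (e : rel V).

Lemma augment_false_nonedge (x : {ffun Ec e -> bool}) u v :
  u != v -> ~~ augment x u v ->
  exists2 f : Ec e, val f = [set u; v] & ~~ x f.
Proof.
move=> neq_uv /norP[not_e /existsPn not_added].
have uv_nonedge : is_nonedge e [set u; v].
  by apply/existsP; exists u; apply/existsP; exists v; rewrite neq_uv eqxx.
pose f : Ec e := exist _ [set u; v] uv_nonedge.
by exists f => //; have := not_added f; rewrite /= eqxx.
Qed.

Lemma XG_at_most_one_zero (x : {ffun Ec e -> bool}) :
  (forall g h : Ec e, ~~ x g -> ~~ x h -> g = h) -> XG x.
Proof.
move=> one_zero x0 [|a0 [|a1 [|a2 [|a3 c]]]] //= _ uniq_c _.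
case chord02: (augment x a0 a2); first by exists 0%N, 2%N; rewrite !modn_small.
case chord13: (augment x a1 a3).
  by exists 1%N, 3%N; case: c {uniq_c}.
move: uniq_c; rewrite !inE => /andP[/norP[neq01 /norP[neq02 /norP[neq03 _]]]].
case/andP => /norP[_ /norP[neq13 _]] _.
have [f02 val_f02 zero02] := augment_false_nonedge neq02 (negbT chord02).
have [f13 val_f13 zero13] := augment_false_nonedge neq13 (negbT chord13).
have : a0 \in [set a1; a3].
  by rewrite -val_f13 -(one_zero _ _ zero02 zero13) val_f02 !inE eqxx.
by rewrite !inE (negbTE neq01) (negbTE neq03).
Qed.

Lemma XG_ones_but (o : option (Ec e)) : XG (ones_but o).
Proof.
apply: XG_at_most_one_zero => g h; rewrite !ffunE !negbK.
by move=> /eqP <- /eqP [].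
Qed.

End ChordalCompletions.

Section Dimensions.
Variables (R : realFieldType) (V : finType) (e : rel V).

Let P := conv01 (R := R) (@XG V e).

Lemma aff_rank_conv_XG : aff_rank P #|{: Ec e}|.+1.
Proof.
split=> [|m p _]; last exact: aff_indep_card.
pose o (j : 'I_#|{: Ec e}|.+1) :=
  enum_val (cast_ord (esym (card_option _)) j).
exists (fun j i => (ones_but (o j) i)%:R); split.
  by move=> j; apply/conv01_point/XG_ones_but.
by apply: aff_indep_ones_but => j j' /enum_val_inj /cast_ord_inj.
Qed.

Lemma aff_rank_facet_XG (f : Ec e) :
  aff_rank (fun y => P y /\ \sum_i (if i == f then 1 else 0) * y i = 1)
    #|{: Ec e}|.
Proof.
split=> [|m p on_face]; last first.
  apply: (@aff_indep_card_const_coord _ _ _ _ f 1) => j.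
  by have [_] := on_face j; rewrite sum_indicator_mul.
pose o (j : 'I_#|{: Ec e}|) :=
  if enum_val j == f then None else Some (enum_val j).
exists (fun j i => (ones_but (o j) i)%:R); split.
  move=> j; split; first by apply/conv01_point/XG_ones_but.
  rewrite sum_indicator_mul ffunE /o.
  by case: ifPn => //= neq_jf; rewrite eq_sym neq_jf.
apply: aff_indep_ones_but => j j'; rewrite /o.
case: eqP => [fj|_]; case: eqP => [fj'|_] //; last by case=> /enum_val_inj.
by move=> _; apply: enum_val_inj; rewrite fj fj'.
Qed.

End Dimensions.

Theorem theorem1 (R : realFieldType) (V : finType) (e : rel V)
    (e_sym : symmetric e) (e_irr : irreflexive e)
    (not_complete : exists u v : V, u != v /\ ~~ e u v) :
  full_dimensional (conv01 (R := R) (@XG V e)) /\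
  (forall f : Ec e,
     facet_defining (conv01 (R := R) (@XG V e))
       (fun g => if g == f then 1 else 0) 1).
Proof.
split=> [|f]; first exact: aff_rank_conv_XG.
split=> [y conv_y|].
  by rewrite sum_indicator_mul; apply: conv01_le1 conv_y.
exists #|{: Ec e}|.
by split; [apply: aff_rank_conv_XG | apply: aff_rank_facet_XG].
Qed.
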